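(* Let $W$ be an $\epsilon$-spectral cluster of $G_0$ and let $A\subseteq V_0$ be closed in $G_0$ with $\mathrm{vol}_{G_0}(W\cap A)\ge\frac23\mathrm{vol}_{G_0}(W)$. Then $A$ dominates $W$, i.e. $\mathrm{vol}_{G_0}(W\cap A)>(1-3\epsilon)\mathrm{vol}_{G_0}(W)$.
   Context: Standing setting: $G_0=(V_0,E_0)$ is a finite simple undirected graph and $0<\epsilon\le 1/2000000$. For a graph $H$, $d_H(v)$ is the degree, $\mathrm{vol}_H(S)=\sum_{v\in S}d_H(v)$, $E(S,T)$ is the set of edges with one endpoint in $S$ and the other in $T$, $\partial_H S=E(S,V(H)\setminus S)$. For $V\subseteq V_0$, $G_0|V$ is the induced subgraph. An $\epsilon$-spectral cluster of $G_0$ is $W\subseteq V_0$ with $\mathrm{vol}_{G_0}(W)>0$, $|\partial_{G_0}W|\le\epsilon\,\mathrm{vol}_{G_0}(W)$, and for every $A\subseteq W$ with $r=\mathrm{vol}_{G_0}(A)/\mathrm{vol}_{G_0}(W)$, $|E(A,W\setminus A)|\ge(r(1-r)-\epsilon)\mathrm{vol}_{G_0}(W)$. A set $A\subseteq V(H)$ is closed in $H$ if no $v\in V(H)\setminus A$ with $d_H(v)>0$ has at least $\frac59 d_H(v)$ of its $H$-neighbors in $A$. A set $A\subseteq V_0$ dominates $W$ if $\mathrm{vol}_{G_0}(W\cap A)>(1-3\epsilon)\mathrm{vol}_{G_0}(W)$. *)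

From mathcomp Require Import all_boot all_order all_algebra.
Set Implicit Arguments. Unset Strict Implicit. Unset Printing Implicit Defensive.
Import Order.TTheory GRing.Theory Num.Theory.
Local Open Scope ring_scope.

Definition simple_graph (V : finType) (e : rel V) : Prop :=
  symmetric e /\ irreflexive e.

Section Graph.
Variables (V : finType) (e : rel V).

Definition nbhd (v : V) : {set V} := [set u | e v u].
Definition deg (v : V) : nat := #|nbhd v|.

Definition vol (S : {set V}) : nat := \sum_(v in S) deg v.

(* For disjoint S, T (the only case
   used) this is exactly the number of edges between S and T. *)
Definition cut (S T : {set V}) : nat :=
  #|[set p : V * V | (p.1 \in S) && (p.2 \in T) && e p.1 p.2]|.

Definition boundary (S : {set V}) : nat := cut S (~: S).

Definition spectral_cluster (eps : rat) (W : {set V}) : Prop :=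
  (0 < vol W)%N /\
  ((boundary W)%:R <= eps * (vol W)%:R :> rat) /\
  forall A : {set V}, A \subset W ->
    let r : rat := (vol A)%:R / (vol W)%:R in
    (r * (1 - r) - eps) * (vol W)%:R <= (cut A (W :\: A))%:R.

Definition closed_set (A : {set V}) : Prop :=
  forall v, v \notin A -> (0 < deg v)%N ->
    ~ ((5%:R / 9%:R) * (deg v)%:R <= (#|nbhd v :&: A|)%:R :> rat).

Definition dominates (eps : rat) (A W : {set V}) : Prop :=
  (1 - 3%:R * eps) * (vol W)%:R < (vol (W :&: A))%:R :> rat.

End Graph.

(* Let B := W \ A and r := vol B / vol W, so r <= 1/3.  Every vertex of B lies
   outside the closed set A, so fewer than 5/9 of its edges go to W ∩ A and
   |E(B, W ∩ A)| <= 5/9 vol B.  The cluster inequality for B then gives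
   r (1 - r) - eps <= 5/9 r, i.e. r (4/9 - r) <= eps, which for r <= 1/3 and
   eps tiny forces r < 3 eps. *)

From mathcomp Require Import all_boot all_order all_algebra.
From mathcomp Require Import lra.
Set Implicit Arguments. Unset Strict Implicit. Unset Printing Implicit Defensive.
Import Order.TTheory GRing.Theory Num.Theory.
Local Open Scope ring_scope.

Lemma eps_le_1_100 (eps : rat) :
  eps <= (2%:R * 10%:R ^+ 6)^-1 -> eps <= 1 / 100.
Proof. by move/le_trans; apply; rewrite !exprS expr0; lra. Qed.

Lemma lt_3eps_of_quadratic_le (r eps : rat) :
  0 <= r -> r <= 1 / 3 -> 0 < eps -> eps <= 1 / 100 ->
  r * (1 - r) - eps <= 5 / 9 * r -> r < 3%:R * eps.
Proof.
move=> r_ge0 r_le eps_gt0 eps_le quad.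
have [->|r_neq0] := eqVneq r 0; first by lra.
have r_gt0 : 0 < r by rewrite lt0r r_neq0.
have r_le_9eps : r <= 9 * eps.
  have : 0 <= r * (1 / 3 - r) by apply: mulr_ge0; lra.
  by nra.
have : 0 < r * (1 / 9 - r) by apply: mulr_gt0; lra.
by nra.
Qed.

Lemma dominance_of_cut_bounds (a b c eps : rat) :
  0 <= b -> 0 < a + b -> 0 < eps -> eps <= 1 / 100 ->
  2%:R / 3%:R * (a + b) <= a ->
  (b / (a + b) * (1 - b / (a + b)) - eps) * (a + b) <= c ->
  c <= 5 / 9 * b ->
  (1 - 3%:R * eps) * (a + b) < a.
Proof.
move=> b_ge0 w_gt0 eps_gt0 eps_le Hvol cut_lower cut_upper.
set r := b / (a + b) in cut_lower *.
have r_ge0 : 0 <= r by exact: divr_ge0 b_ge0 (ltW w_gt0).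
have r_le : r <= 1 / 3 by rewrite ler_pdivrMr //; lra.
have b_eq : b = r * (a + b) by rewrite mulfVK ?lt0r_neq0.
clearbody r.
have quad : r * (1 - r) - eps <= 5 / 9 * r.
  by rewrite -(ler_pM2r w_gt0) -(mulrA (5 / 9)) -b_eq (le_trans cut_lower).
have := lt_3eps_of_quadratic_le r_ge0 r_le eps_gt0 eps_le quad.
rewrite -(ltr_pM2r w_gt0) -b_eq.
by lra.
Qed.

Section Graph.
Variables (V : finType) (e : rel V).

Lemma cut_sum_nbhd (S T : {set V}) :
  cut e S T = (\sum_(v in S) #|nbhd e v :&: T|)%N.
Proof.
rewrite /cut -sum1_card.
under [RHS]eq_bigr => v _ do rewrite -sum1_card.
rewrite pair_big_dep /=; apply: eq_bigl => -[x y] /=.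
by rewrite !inE; case: (x \in S); case: (y \in T); case: (e x y).
Qed.

Lemma vol_setID (W A : {set V}) :
  vol e W = (vol e (W :&: A) + vol e (W :\: A))%N.
Proof. exact: big_setID. Qed.

Lemma closed_set_nbhd_le (A : {set V}) v :
  closed_set e A -> v \notin A ->
  (#|nbhd e v :&: A|)%:R <= 5 / 9 * (deg e v)%:R :> rat.
Proof.
move=> A_closed vNA.
have le_deg : (#|nbhd e v :&: A| <= deg e v)%N.
  exact/subset_leq_card/subsetIl.
have [deg0|deg_gt0] := posnP (deg e v).
  by move: le_deg; rewrite deg0 leqn0 => /eqP ->; rewrite mulr0.
by apply: ltW; rewrite ltNge; apply/negP; apply: A_closed.
Qed.

Lemma closed_set_cut_le (A B T : {set V}) :
  closed_set e A -> B \subset ~: A -> T \subset A ->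
  (cut e B T)%:R <= 5 / 9 * (vol e B)%:R :> rat.
Proof.
move=> A_closed BA TA.
rewrite cut_sum_nbhd natr_sum /vol natr_sum mulr_sumr.
apply: ler_sum => v vB.
have vNA : v \notin A by rewrite -in_setC (subsetP BA).
apply: le_trans (closed_set_nbhd_le A_closed vNA).
by rewrite ler_nat; apply/subset_leq_card/setIS.
Qed.

End Graph.

Theorem mainTheorem4 (V : finType) (e : rel V) (eps : rat)
  (He : simple_graph e)
  (Heps0 : 0 < eps) (Heps1 : eps <= (2%:R * 10%:R ^+ 6)^-1)
  (W A : {set V})
  (HW : spectral_cluster e eps W)
  (HA : closed_set e A)
  (Hvol : (2%:R / 3%:R) * (vol e W)%:R <= (vol e (W :&: A))%:R :> rat) :
  dominates e eps A W.
Proof.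
case: HW => volW_gt0 [_ cluster].
have cut_lower := cluster (W :\: A) (subsetDl W A).
rewrite /= setDDr setDv set0U in cut_lower.
have cut_upper := closed_set_cut_le (T := W :&: A) HA (subsetDr W A) (subsetIr W A).
move: volW_gt0 Hvol cut_lower.
rewrite /dominates (vol_setID e W A) -(ltr0n rat) !natrD.
move=> volW_gt0 Hvol cut_lower.
exact: dominance_of_cut_bounds (ler0n _ _) volW_gt0 Heps0 (eps_le_1_100 Heps1)
  Hvol cut_lower cut_upper.
Qed.
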